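(* Let $G=(V,E)$ be a connected graph with $n$ vertices and maximum degree $\Delta$, let $k\in\{2,\dots,n-1\}$, and let $\mathscr{S}$ be any $k$-block system for $G$. Then $\mu^+(\mathscr{S})\le\Delta-1+\frac1k$.
   Context: Potts configurations on $G$: $\sigma\in\Omega=[q]^V$, $q$ a positive integer. A $k$-block system for $G$ is a family $\mathscr{S}=\{S_v:v\in V\}$ of subsets of $V$ with $v\in S_v$, $|S_v|=k$ and $G[S_v]$ connected for all $v$. For $S\subseteq V$, $\partial S$ is the set of vertices of $V\setminus S$ with a neighbour in $S$. For $X\in\Omega$ and $c\in[q]^S$, $X^{(S,c)}$ equals $c$ on $S$ and $X$ off $S$; $\mu_{X,S}(c)$ is the number of monochromatic edges of $X^{(S,c)}$ incident with at least one vertex of $S$. A colour used by $c$ is free with respect to $X,S$ if it does not occur among $\{X(u):u\in\partial S\}$; $f(X,S,c)$ is the number of free colours used by $c$. $\mu^+_{X,S,f}=\max\{\mu_{X,S}(c)/(|S|-f): c\in[q]^S,\ f(X,S,c)=f\}$ (empty maximum $=0$), and $\mu^+(\mathscr{S})=\max_{S\in\mathscr{S}}\max_{X\in\Omega}\max_{f\in\{0,\dots,|S|-1\}}\mu^+_{X,S,f}$. *)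

From HB Require Import structures.
From mathcomp Require Import all_boot all_order all_algebra.
Set Implicit Arguments. Unset Strict Implicit. Unset Printing Implicit Defensive.
Import Order.TTheory GRing.Theory Num.Theory.

Definition simple_graph (V : finType) (e : rel V) : Prop :=
  symmetric e /\ irreflexive e.

Definition connected_graph (V : finType) (e : rel V) : Prop :=
  forall u w : V, connect e u w.

Definition induced_rel (V : finType) (e : rel V) (S : {set V}) : rel V :=
  fun x y => [&& e x y, x \in S & y \in S].

Definition induced_connected (V : finType) (e : rel V) (S : {set V}) : Prop :=
  forall u w, u \in S -> w \in S -> connect (induced_rel e S) u w.

Definition degree (V : finType) (e : rel V) (v : V) : nat := #|[set w | e v w]|.

Definition max_degree (V : finType) (e : rel V) : nat := \max_(v : V) degree e v.

Definition block_system (V : finType) (e : rel V) (k : nat) (S : V -> {set V}) : Prop :=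
  forall v, [/\ v \in S v, #|S v| = k & induced_connected e (S v)].

Definition vboundary (V : finType) (e : rel V) (S : {set V}) : {set V} :=
  [set u | (u \notin S) && [exists w in S, e u w]].

Definition config (V : finType) (q : nat) := {ffun V -> 'I_q}.

(* X^{(S,c)}: equals c on S and X off S (c given as a configuration on V,
   only its values on S are used). *)
Definition replace (V : finType) (q : nat) (X c : config V q) (S : {set V}) : config V q :=
  [ffun v => if v \in S then c v else X v].

Definition mu (V : finType) (e : rel V) (q : nat) (X c : config V q) (S : {set V}) : nat :=
  let Y := replace X c S in
  #|[set E : {set V} | [exists u, exists w,
       [&& E == [set u; w], e u w, Y u == Y w & (u \in S) || (w \in S)]]]|.

Definition nfree (V : finType) (e : rel V) (q : nat) (X c : config V q) (S : {set V}) : nat :=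
  #|[set a : 'I_q | [exists v in S, c v == a] &&
                    ~~ [exists u in vboundary e S, X u == a]]|.

Local Open Scope ring_scope.

(* mu^+_{X,S,f}, max over c in [q]^S (functions on the subtype of S), extended
   by X off S;  colourings of S with f free colours; empty max = 0 *)
Definition mu_plus_f (V : finType) (e : rel V) (q : nat) (X : config V q) (S : {set V}) (f : nat) : rat :=
  \big[Num.max/0]_(c : {ffun {v : V | v \in S} -> 'I_q})
     (let c' : config V q := [ffun v => if @insub _ (fun x => x \in S) _ v is Some s then c s else X v] in
      if nfree e X c' S == f then (mu e X c' S)%:R / (#|S| - f)%N%:R else 0).

Definition mu_plus (V : finType) (e : rel V) (q : nat) (S : V -> {set V}) : rat :=
  \big[Num.max/0]_(v : V) \big[Num.max/0]_(X : config V q)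
     \big[Num.max/0]_(f < #|S v|) mu_plus_f e X (S v) f.

From mathcomp Require Import all_boot all_order all_algebra zify lra.
Import Order.TTheory GRing.Theory Num.Theory.
Set Implicit Arguments. Unset Strict Implicit. Unset Printing Implicit Defensive.

(* Fix a block B (|B| = k), a configuration X and a recolouring c of B, and
   put Y = X^(B,c).  Split the monochromatic edges counted by mu by colour:
   for a colour a let A be the vertices of B coloured a and m the number of
   a-coloured edges meeting B.
   - If a is not free, charging every such edge and every edge of G[B]
     meeting A to an endpoint in A gives  m + #(edges of G[B] meeting A)
     <= |A| D; a spanning-tree count in the connected G[B] bounds the second
     term below by |A| (by k - 1 when A = B), so  k m <= ((D-1)k+1) |A|.
   - If a is free, all these edges lie inside A, and (G being connected and
     B <> V) some vertex of A has a neighbour outside A; hence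
     2m <= |A|(|A|-1) and 2m + 1 <= |A| D, so  k m <= ((D-1)k+1)(|A| - 1).
   Summing over the colours gives  k mu <= ((D-1)k+1)(k - f), that is
   mu / (k - f) <= D - 1 + 1/k, and the theorem is the maximum of this bound. *)

Section EdgeSets.
Variable V : finType.
Implicit Types (A : {set V}) (P Q : rel V).

Lemma exit_edge (r : rel V) A x y :
  connect r x y -> x \in A -> y \notin A ->
  exists x', exists y', [/\ x' \in A, y' \notin A & r x' y'].
Proof.
move=> /connectP [p Hp ->]; elim: p x Hp => [|z p IH] x /=; first by move=> _ ->.
move=> /andP [rxz pz] xA yA; case zA: (z \in A); first exact: IH pz zA yA.
by exists x, z; rewrite zA.
Qed.

Lemma card_bigcup_le (I T : finType) (p : pred I) (F : I -> {set T}) :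
  (#|\bigcup_(i | p i) F i| <= \sum_(i | p i) #|F i|)%N.
Proof.
elim/big_rec2: _ => [|i U n _ IH]; first by rewrite cards0.
by apply: leq_trans (leq_card_setU _ _) _; rewrite leq_add2l.
Qed.

Definition edges_of P : {set {set V}} :=
  [set E | [exists u, exists w, (E == [set u; w]) && P u w]].

Lemma mem_edges_of P u w : symmetric P -> ([set u; w] \in edges_of P) = P u w.
Proof.
move=> Psym; apply/idP/idP => [|Puw]; last first.
  by rewrite inE; apply/existsP; exists u; apply/existsP; exists w; rewrite eqxx.
rewrite inE => /existsP [u' /existsP [w' /andP [/eqP E Pu'w']]].
have hu : u \in [set u'; w'] by rewrite -E set21.
have hw : w \in [set u'; w'] by rewrite -E set22.
have hu' : u' \in [set u; w] by rewrite E set21.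
have hw' : w' \in [set u; w] by rewrite E set22.
move: hu hw hu' hw'; rewrite !inE.
do 2 case/orP => /eqP ->; rewrite ?orbb //.
- by move=> _ /eqP wu; rewrite -{2}wu.
- by rewrite Psym.
- by move=> /eqP uw _; rewrite -{1}uw.
Qed.

Lemma edges_of_sub P Q : (forall u w, P u w -> Q u w) -> edges_of P \subset edges_of Q.
Proof.
move=> PQ; apply/subsetP => E; rewrite !inE => /existsP [u /existsP [w /andP [Euw Puw]]].
by apply/existsP; exists u; apply/existsP; exists w; rewrite Euw PQ.
Qed.

Lemma card_edges_le P Q A :
  (forall u w, P u w -> exists2 x, x \in A & exists y, [set u; w] = [set x; y] /\ Q x y) ->
  (#|edges_of P| <= \sum_(x in A) #|[set y | Q x y]|)%N.
Proof.
move=> charge.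
have sub : edges_of P \subset \bigcup_(x in A) [set [set x; y] | y in [set y | Q x y]].
  apply/subsetP => E; rewrite inE => /existsP [u /existsP [w /andP [/eqP -> Puw]]].
  have [x xA [y [-> Qxy]]] := charge u w Puw.
  by apply/bigcupP; exists x => //; apply/imsetP; exists y; rewrite ?inE.
apply: leq_trans (subset_leq_card sub) _; apply: leq_trans (card_bigcup_le _ _) _.
by apply: leq_sum => x _; apply: leq_imset_card.
Qed.

(* A strict total order on the vertices, used to orient edges inside A. *)
Definition rank_lt (u w : V) := (enum_rank u < enum_rank w)%N.

Lemma rank_lt_total u w : u != w -> rank_lt u w || rank_lt w u.
Proof.
move=> uw; rewrite /rank_lt; case: ltngtP => // /val_inj /enum_rank_inj E.
by rewrite E eqxx in uw.
Qed.

Lemma rank_lt_asym u w : rank_lt u w -> rank_lt w u = false.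
Proof. by rewrite /rank_lt => h; apply/negbTE; rewrite -leqNgt ltnW. Qed.

Lemma charge_oriented P (lt : rel V) A :
  symmetric P -> irreflexive P -> (forall u w, u != w -> lt u w || lt w u) ->
  (forall u w, P u w -> (u \in A) || (w \in A)) ->
  (#|edges_of P| <= \sum_(x in A) #|[set y | P x y && ((y \notin A) || lt x y)]|)%N.
Proof.
move=> Psym Pirr lt_total touch; apply: card_edges_le.
suff oriented u w : P u w -> u \in A ->
    exists2 x, x \in A & exists y, [set u; w] = [set x; y] /\ P x y && ((y \notin A) || lt x y).
  move=> u w Puw; case/orP: (touch u w Puw) => [uA|wA]; first exact: oriented.
  by rewrite setUC; apply: oriented; rewrite // Psym.
move=> Puw uA; have uw : u != w by apply: contraTneq Puw => ->; rewrite Pirr.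
case wA: (w \in A); last by exists u => //; exists w; rewrite Puw wA.
case/orP: (lt_total u w uw) => l; first by exists u => //; exists w; rewrite Puw l orbT.
by exists w => //; exists u; rewrite setUC Psym Puw l orbT.
Qed.

(* Two edge families meeting A, whose common edges lie inside A, fit together
   in the neighbourhoods of A: orient the edges inside A one way for P1 and
   the other way for P2, so that no neighbour of x is charged twice. *)
Lemma double_charge P1 P2 A :
  symmetric P1 -> irreflexive P1 -> (forall u w, P1 u w -> (u \in A) || (w \in A)) ->
  symmetric P2 -> irreflexive P2 -> (forall u w, P2 u w -> (u \in A) || (w \in A)) ->
  (forall u w, P1 u w -> P2 u w -> w \in A) ->
  (#|edges_of P1| + #|edges_of P2| <= \sum_(x in A) #|[set y | P1 x y || P2 x y]|)%N.
Proof.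
move=> sym1 irr1 touch1 sym2 irr2 touch2 overlap.
have gt_total u w : u != w -> rank_lt w u || rank_lt u w by rewrite orbC; apply: rank_lt_total.
apply: leq_trans (leq_add (charge_oriented sym1 irr1 rank_lt_total touch1)
                          (charge_oriented sym2 irr2 gt_total touch2)) _.
rewrite -big_split /=; apply: leq_sum => x _; rewrite -cardsUI.
have -> : [set y | P1 x y && ((y \notin A) || rank_lt x y)] :&:
          [set y | P2 x y && ((y \notin A) || rank_lt y x)] = set0.
  apply/setP => y; rewrite !inE; apply/negbTE.
  apply/negP => /andP [/andP [P1xy l1] /andP [P2xy l2]].
  by move: l1 l2; rewrite (overlap x y) //= => /rank_lt_asym ->.
rewrite cards0 addn0; apply: subset_leq_card; apply/subsetP => y.
by rewrite !inE => /orP [] /andP [->] //; rewrite orbT.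
Qed.

End EdgeSets.

(* The arithmetic of a free colour class of size s >= 1: its degree sum and
   clique bounds imply m <= (D-1)(s-1), hence the weighted bound. *)
Lemma free_colour_arith (k m s D : nat) : (2 <= D)%N -> (1 <= s)%N ->
  (2 * m + 1 <= s * D)%N -> (2 * m <= s * (s - 1))%N ->
  (k * m <= ((D - 1) * k + 1) * (s - 1))%N.
Proof.
move=> D2 s1 deg_sum clique.
have m_le : (m <= (D - 1) * (s - 1))%N.
  case: (ltnP s 3) => s3.
    have [s_eq|s_eq] : s = 1 \/ s = 2 by lia.
      by move: deg_sum clique; rewrite s_eq; lia.
    by move: deg_sum clique; rewrite s_eq; nia.
  case: (ltnP D 3) => D3; last by nia.
  have D_eq : D = 2 by lia.
  by move: deg_sum; rewrite D_eq; nia.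
apply: (@leq_trans (k * ((D - 1) * (s - 1)))); first by rewrite leq_mul2l m_le orbT.
by rewrite mulnA [k * _]mulnC leq_mul2r leq_addr orbT.
Qed.

(* The target bound is nonnegative (needed for maxima over empty ranges). *)
Lemma target_bound_ge0 (D k : nat) : (1 <= D)%N -> (0 <= D%:R - 1 + 1 / k%:R :> rat)%R.
Proof.
move=> D1; have : (1 <= D%:R :> rat)%R by rewrite ler1n.
have : (0 <= 1 / k%:R :> rat)%R by rewrite divr_ge0 ?ler0n.
lra.
Qed.

Lemma ratio_bound (m f k D : nat) : (f < k)%N -> (1 <= D)%N ->
  (k * m <= ((D - 1) * k + 1) * (k - f))%N ->
  (m%:R / (k - f)%N%:R <= D%:R - 1 + 1 / k%:R :> rat)%R.
Proof.
move=> fk D1 h; have k0 : (0 < k)%N by apply: leq_ltn_trans fk.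
have -> : (D%:R - 1 + 1 / k%:R = ((D - 1) * k + 1)%N%:R / k%:R :> rat)%R.
  have kR : (k%:R : rat) != 0%R by rewrite pnatr_eq0 -lt0n.
  by rewrite natrD natrM natrB // mulrDl mulfK //; lra.
rewrite ler_pdivrMr ?ltr0n ?subn_gt0 // mulrAC ler_pdivlMr ?ltr0n //.
by rewrite -!natrM ler_nat mulnC.
Qed.

Section SimpleGraph.
Variables (V : finType) (e : rel V).
Hypotheses (e_sym : symmetric e) (e_irr : irreflexive e).
Implicit Types (S A : {set V}).

Definition inner_edge S A : rel V :=
  fun u w => [&& e u w, u \in S, w \in S & (u \in A) || (w \in A)].

Lemma inner_edge_sym S A : symmetric (inner_edge S A).
Proof.
move=> u w; rewrite /inner_edge e_sym.
by case: (u \in S); case: (w \in S); rewrite //= orbC.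
Qed.

Lemma inner_edge_irr S A : irreflexive (inner_edge S A).
Proof. by move=> u; rewrite /inner_edge e_irr. Qed.

(* Spanning-tree count: if G[S] is connected and A is a subset of S
   avoiding some r in S, then G[S] has at least |A| edges meeting A
   (remove from A the endpoint of an edge leaving A towards r). *)
Lemma card_le_inner_edges S A r :
  induced_connected e S -> r \in S -> r \notin A -> A \subset S ->
  (#|A| <= #|edges_of (inner_edge S A)|)%N.
Proof.
move=> conn rS; elim: {A}_.+1 {-2}A (ltnSn #|A|) => // n IH A ltAn rA AS.
have [-> | [x0 x0A]] := set_0Vmem A; first by rewrite cards0.
have [x [y [xA yA /and3P [exy xS yS]]]] := exit_edge (conn x0 r (subsetP AS _ x0A) rS) x0A rA.
have ltA'n : (#|A :\ x| < n)%N by move: ltAn; rewrite (cardsD1 x A) xA.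
have rA' : r \notin A :\ x by rewrite !inE (negbTE rA) andbF.
have A'S : A :\ x \subset S by apply: subset_trans AS; apply: subsetDl.
have sub : edges_of (inner_edge S (A :\ x)) \proper edges_of (inner_edge S A).
  apply/properP; split.
    apply: edges_of_sub => u w; rewrite /inner_edge => /and4P [-> -> ->]; rewrite !inE /=.
    by case/orP => /andP [_ ->]; rewrite ?orbT.
  exists [set x; y]; rewrite !mem_edges_of; try exact: inner_edge_sym.
  - by rewrite /inner_edge exy xS yS xA.
  - by rewrite /inner_edge !inE eqxx (negbTE yA) !andbF.
rewrite (cardsD1 x A) xA add1n; apply: leq_trans (proper_card sub).
by rewrite ltnS; apply: IH.
Qed.

Section ColourClasses.
Variables (T : eqType) (D : nat).
Hypothesis deg_le : forall v, (degree e v <= D)%N.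
Variables (S : {set V}) (Y : V -> T) (a : T).

Definition mono_edge : rel V :=
  fun u w => [&& e u w, Y u == a, Y w == a & (u \in S) || (w \in S)].

Definition colour_class : {set V} := [set v in S | Y v == a].

Lemma mono_edge_sym : symmetric mono_edge.
Proof.
move=> u w; rewrite /mono_edge e_sym.
by case: (Y u == a); case: (Y w == a); rewrite //= orbC.
Qed.

Lemma mono_edge_irr : irreflexive mono_edge.
Proof. by move=> u; rewrite /mono_edge e_irr. Qed.

Lemma mono_edge_touch u w : mono_edge u w -> (u \in colour_class) || (w \in colour_class).
Proof. by case/and4P => _ Yu Yw; rewrite !inE Yu Yw !andbT. Qed.

Lemma nonfree_colour_bound :
  (#|edges_of mono_edge| + #|edges_of (inner_edge S colour_class)| <= #|colour_class| * D)%N.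
Proof.
have touch u w : inner_edge S colour_class u w -> (u \in colour_class) || (w \in colour_class).
  by case/and4P.
have overlap u w : mono_edge u w -> inner_edge S colour_class u w -> w \in colour_class.
  by case/and4P => _ _ Yw _ /and4P [_ _ wS _]; rewrite inE wS.
apply: leq_trans (double_charge mono_edge_sym mono_edge_irr mono_edge_touch
  (inner_edge_sym _ _) (inner_edge_irr _ _) touch overlap) _.
rewrite -sum_nat_const; apply: leq_sum => x _; apply: leq_trans (deg_le x).
by apply: subset_leq_card; apply/subsetP => y; rewrite !inE => /orP [] /andP [].
Qed.

(* If no neighbour of S outside S has colour a, all a-edges lie inside the
   colour class; counting them from both ends gives the degree-sum bound,
   strict because x0 has a neighbour y0 outside the class, and the clique
   bound. *)
Lemma free_colour_bound x0 y0 :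
  (forall u w, e u w -> u \in S -> w \notin S -> Y w != a) ->
  x0 \in colour_class -> y0 \notin colour_class -> e x0 y0 ->
  (2 * #|edges_of mono_edge| + 1 <= #|colour_class| * D)%N /\
  (2 * #|edges_of mono_edge| <= #|colour_class| * (#|colour_class| - 1))%N.
Proof.
move=> free x0A y0A ex0y0; set A := colour_class.
pose N x := [set y | mono_edge x y || mono_edge x y].
have inside u w : mono_edge u w -> w \in A.
  case/and4P => euw _ Yw; rewrite /A /colour_class inE Yw andbT orbC.
  case wS: (w \in S) => //= uS.
  by move: (free u w euw uS); rewrite wS Yw => /(_ isT).
have overlap u w : mono_edge u w -> mono_edge u w -> w \in A by move=> _ /inside.
have two_m : (2 * #|edges_of mono_edge| <= \sum_(x in A) #|N x|)%N.
  rewrite mul2n -addnn; exact: (double_charge mono_edge_sym mono_edge_irr mono_edge_touch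
                                 mono_edge_sym mono_edge_irr mono_edge_touch overlap).
have N_sub_nbrs x : N x \subset [set y | e x y].
  by apply/subsetP => y; rewrite !inE orbb => /andP [].
have N_le_class x : x \in A -> (#|N x| <= #|A| - 1)%N.
  move=> xA; rewrite (cardsD1 x A) xA add1n subSS subn0; apply: subset_leq_card.
  apply/subsetP => y; rewrite inE orbb => mxy; rewrite in_setD1 (inside _ _ mxy) andbT.
  by apply: contraTneq mxy => ->; rewrite mono_edge_irr.
have N_lt_deg : (#|N x0| < D)%N.
  apply: leq_trans (deg_le x0); apply: proper_card; apply/properP; split => //.
  by exists y0; rewrite !inE ?ex0y0 // orbb; apply: contra y0A; apply: inside.
split.
  apply: leq_trans (leq_add two_m (leqnn 1)) _; rewrite -sum_nat_const.
  rewrite (bigD1 x0) //= [X in (_ <= X)%N](bigD1 x0) //= addnAC.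
  apply: leq_add; first by rewrite addn1.
  by apply: leq_sum => x _; apply: leq_trans (subset_leq_card (N_sub_nbrs x)) (deg_le x).
apply: leq_trans two_m _; rewrite -sum_nat_const; exact: leq_sum N_le_class.
Qed.

Lemma nonfree_colour_term r : induced_connected e S -> r \in S ->
  (#|S| * #|edges_of mono_edge| <= ((D - 1) * #|S| + 1) * #|colour_class|)%N.
Proof.
move=> conn rS; have bound := nonfree_colour_bound.
have AS : colour_class \subset S by apply/subsetP => v; rewrite inE => /andP [].
case: (boolP (S \subset colour_class)) => [SA | /subsetPn [r' r'S r'A]].
  have AeqS : colour_class = S by apply/eqP; rewrite eqEsubset AS SA.
  have tree : (#|S :\ r| <= #|edges_of (inner_edge S S)|)%N.
    apply: leq_trans (card_le_inner_edges conn rS _ (subsetDl _ _)) _; first by rewrite setD11.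
    apply/subset_leq_card/edges_of_sub => u w.
    by rewrite /inner_edge => /and4P [-> -> -> _]; rewrite orbT.
  rewrite AeqS mulnC leq_mul2r; apply/orP; right.
  move: tree bound; rewrite AeqS (cardsD1 r S) rS mulnBl mul1n mulnC; lia.
have tree := card_le_inner_edges conn r'S r'A AS.
apply: (@leq_trans (#|S| * ((D - 1) * #|colour_class|))).
  by rewrite leq_mul2l mulnBl mul1n; apply/orP; right; move: tree bound; rewrite mulnC; lia.
by rewrite mulnA leq_mul2r mulnC leq_addr orbT.
Qed.

Lemma free_colour_term x0 y0 : (2 <= D)%N ->
  (forall u w, e u w -> u \in S -> w \notin S -> Y w != a) ->
  x0 \in colour_class -> y0 \notin colour_class -> e x0 y0 ->
  (#|S| * #|edges_of mono_edge| <= ((D - 1) * #|S| + 1) * (#|colour_class| - 1))%N.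
Proof.
move=> D2 free x0A y0A ex0y0; have [deg_sum clique] := free_colour_bound free x0A y0A ex0y0.
by apply: free_colour_arith deg_sum clique => //; rewrite card_gt0; apply/set0Pn; exists x0.
Qed.

End ColourClasses.

Section BlockRecolouring.
Variables (q D : nat) (X c : config V q) (B : {set V}).
Hypothesis deg_le : forall v, (degree e v <= D)%N.

Let Y : config V q := replace X c B.

Lemma recolour_in v : v \in B -> Y v = c v.
Proof. by move=> vB; rewrite /Y /replace ffunE vB. Qed.

Lemma recolour_out v : v \notin B -> Y v = X v.
Proof. by move=> vB; rewrite /Y /replace ffunE (negbTE vB). Qed.

Definition free_colour (a : 'I_q) : bool :=
  [exists v in B, c v == a] && ~~ [exists u in vboundary e B, X u == a].

Lemma free_colour_used a : free_colour a -> (0 < #|colour_class B Y a|)%N.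
Proof.
case/andP => /existsP [v /andP [vB cv]] _; rewrite card_gt0; apply/set0Pn; exists v.
by rewrite inE vB recolour_in.
Qed.

Lemma free_colour_absent a : free_colour a ->
  forall u w, e u w -> u \in B -> w \notin B -> Y w != a.
Proof.
case/andP => _ absent u w euw uB wB; rewrite recolour_out //; apply: contra absent => Xw.
apply/existsP; exists w; rewrite Xw andbT inE wB /=; apply/existsP; exists u.
by rewrite uB e_sym euw.
Qed.

(* The per-colour estimate  k m_a <= ((D-1)k+1)(|A_a| - [a free]); for a free
   colour the edge leaving the class comes from a walk to y outside B. *)
Lemma colour_term r y a :
  connected_graph e -> (2 <= D)%N -> induced_connected e B -> r \in B -> y \notin B ->
  (#|B| * #|edges_of (mono_edge B Y a)| <=
     ((D - 1) * #|B| + 1) * (#|colour_class B Y a| - free_colour a))%N.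
Proof.
move=> conn_G D2 conn rB yB.
case free_a: (free_colour a); last by rewrite subn0; apply: nonfree_colour_term conn rB.
have [x0 x0A] : exists x0, x0 \in colour_class B Y a.
  by apply/set0Pn; rewrite -card_gt0 free_colour_used.
have yA : y \notin colour_class B Y a by rewrite inE (negbTE yB).
have [x [y0 [xA y0A exy0]]] := exit_edge (conn_G x0 y) x0A yA.
exact: free_colour_term D2 (free_colour_absent free_a) xA y0A exy0.
Qed.

Lemma mu_le_sum_colours :
  (mu e X c B <= \sum_(a : 'I_q) #|edges_of (mono_edge B Y a)|)%N.
Proof.
apply: leq_trans (card_bigcup_le _ _); apply: subset_leq_card.
apply/subsetP => E; rewrite inE => /existsP [u /existsP [w /and4P [/eqP -> euw Yuw uw]]].
apply/bigcupP; exists (Y u) => //; rewrite inE; apply/existsP; exists u; apply/existsP; exists w.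
by rewrite eqxx /mono_edge euw eqxx -(eqP Yuw) eqxx uw.
Qed.

Lemma sum_colour_classes : \sum_(a : 'I_q) #|colour_class B Y a| = #|B|.
Proof.
rewrite -sum1_card (partition_big Y xpredT) //=.
by apply: eq_bigr => a _; rewrite -sum1_card; apply: eq_bigl => v; rewrite !inE.
Qed.

Lemma sum_free_colours : \sum_(a : 'I_q) (free_colour a : nat) = nfree e X c B.
Proof.
rewrite /nfree -sum1_card [RHS]big_mkcond /=; apply: eq_bigr => a _.
by rewrite inE -/(free_colour a); case: (free_colour a).
Qed.

Lemma block_bound r y :
  connected_graph e -> (2 <= D)%N -> induced_connected e B -> r \in B -> y \notin B ->
  (#|B| * mu e X c B <= ((D - 1) * #|B| + 1) * (#|B| - nfree e X c B))%N.
Proof.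
move=> conn_G D2 conn rB yB.
apply: leq_trans (leq_mul (leqnn _) mu_le_sum_colours) _; rewrite big_distrr /=.
apply: (@leq_trans (\sum_(a < q) ((D - 1) * #|B| + 1) *
                                  (#|colour_class B Y a| - free_colour a))).
  by apply: leq_sum => a _; apply: colour_term conn_G D2 conn rB yB.
rewrite -big_distrr /= leq_mul2l sumnB; last first.
  by move=> a _; case free_a: (free_colour a); rewrite // free_colour_used.
by rewrite sum_colour_classes sum_free_colours leqnn orbT.
Qed.

End BlockRecolouring.

(* A connected block of size >= 2 with a vertex outside it forces a vertex of
   degree >= 2: one neighbour inside the block and one outside. *)
Lemma max_degree_ge2 B r y :
  connected_graph e -> induced_connected e B -> (2 <= #|B|)%N ->
  r \in B -> y \notin B -> (2 <= max_degree e)%N.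
Proof.
move=> conn_G conn B2 rB yB.
have [x [y' [xB y'B exy']]] := exit_edge (conn_G r y) rB yB.
have [z zBx] : exists z, z \in B :\ x.
  by apply/set0Pn; rewrite -card_gt0; move: B2; rewrite (cardsD1 x B) xB.
move: zBx; rewrite !inE => /andP [zx zB].
have zNx : z \notin [set x] by rewrite in_set1.
have [x' [w [/set1P -> wx /and3P [exw _ wB]]]] := exit_edge (conn x z xB zB) (set11 x) zNx.
apply: leq_trans (leq_bigmax x); apply: leq_trans (subset_leq_card (_ : [set y'; w] \subset _)).
  by rewrite cards2; case: eqP => // E; rewrite E wB in y'B.
by apply/subsetP => u; rewrite !inE => /orP [] /eqP ->.
Qed.

Lemma mu_plus_f_le q D (X : config V q) B r y f :
  (forall v, (degree e v <= D)%N) -> connected_graph e -> (2 <= D)%N ->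
  induced_connected e B -> r \in B -> y \notin B -> (f < #|B|)%N ->
  (mu_plus_f e X B f <= D%:R - 1 + 1 / #|B|%:R)%R.
Proof.
move=> deg_le conn_G D2 conn rB yB fB.
apply: bigmax_le => [|c _]; first by apply: target_bound_ge0; apply: ltnW.
rewrite /=; case: eqP => [f_eq|_]; last by apply: target_bound_ge0; apply: ltnW.
apply: ratio_bound fB (ltnW D2) _; rewrite -f_eq.
exact: block_bound deg_le r y conn_G D2 conn rB yB.
Qed.

End SimpleGraph.

Unset Implicit Arguments.

Theorem lemma2p6 (V : finType) (e : rel V) (q : nat) (k : nat)
    (S : V -> {set V}) :
  simple_graph e -> connected_graph e -> (0 < q)%N ->
  (2 <= k)%N -> (k <= #|V| - 1)%N ->
  block_system e k S ->
  (mu_plus e q S <= (max_degree e)%:R - 1 + 1 / k%:R :> rat)%R.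
Proof.
move=> [e_sym e_irr] conn_G _ k2 kV blocks.
have deg_le v : (degree e v <= max_degree e)%N by apply: leq_bigmax.
have outside v : exists y, y \notin S v.
  have [y] : exists y, y \in ~: S v.
    by apply/card_gt0P; move: (cardsC (S v)); case: (blocks v) => _ -> _; lia.
  by rewrite inE; exists y.
have [v0 _] : exists v0, v0 \in [set: V] by apply/card_gt0P; rewrite cardsT; lia.
have D2 : (2 <= max_degree e)%N.
  have [y yS] := outside v0; have [v0S cardS connS] := blocks v0.
  by apply: max_degree_ge2 conn_G connS _ v0S yS; rewrite cardS.
have bound_ge0 := target_bound_ge0 k (ltnW D2).
rewrite /mu_plus; apply: bigmax_le => // v _; apply: bigmax_le => // X _.
apply: bigmax_le => // f _; have [y yS] := outside v; have [vS cardS connS] := blocks v.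
by rewrite -cardS; apply: mu_plus_f_le deg_le conn_G D2 connS vS yS (ltn_ord f).
Qed.
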